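(* Let $n\ge1$ and $\pi\in\mathfrak S_n$. For every tree $T_\sigma\in\mathrm{Orb}(T_\pi)$ (with $\sigma\in\mathfrak S_n$) one has $\mathrm{as}(\sigma)\ge \mathrm{leaf}(T_\pi)$, and there is exactly one tree $T_{\sigma}\in\mathrm{Orb}(T_\pi)$ with $\mathrm{as}(\sigma)=\mathrm{leaf}(T_\pi)$.
   Context: All trees are rooted binary trees in which each child of a node is designated as a left or a right child. For a finite totally ordered set $Y$, a min–max tree on $Y$ is such a tree whose nodes are labeled bijectively by $Y$ so that the label of each node is either the minimum or the maximum of the labels in its subtree. A node with at least one child is inner; an inner node is a min-node (resp. max-node) if its label is the minimum (resp. maximum) of the labels of its subtree. An HR-tree is a min–max tree in which every inner node $s$ has a nonempty right subtree containing the maximum label of the subtree of $s$ if $s$ is a min-node, and the minimum label of that subtree if $s$ is a max-node. The reading word $w(T)$ is the in-order reading $w(T)=w(L)\,\ell\,w(R)$ ($\ell$ the root label, $L,R$ the left and right subtrees). The map $T\mapsto w(T)$ is a bijection from HR-trees labeled by $[n]$ onto $\mathfrak S_n$; $T_\pi$ denotes the HR-tree with $w(T_\pi)=\pi$. $\mathrm{leaf}(T)$ is the number of leaves of $T$. HR-action: for $i\in[n]$ and an HR-tree $T_\pi$, let $v$ be the node labeled $\pi_i$. If $v$ is a leaf, $\psi_i(T_\pi)=T_\pi$. Otherwise let $R$ be the set consisting of $\pi_i$ and the labels of the right subtree of $v$; relabel the nodes of $v$ and its right subtree, keeping the shape, so that $v$ receives $\max R$ if $v$ is a min-node and $\min R$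 if $v$ is a max-node, and the nodes of the right subtree receive the remaining elements of $R$ by the order-preserving bijection from their old labels; all other labels are unchanged. The $\psi_i$ are pairwise commuting involutions on the set of HR-trees labeled by $[n]$, and $\mathrm{Orb}(T)$ denotes the set of all trees obtained from $T$ by compositions of the $\psi_i$. For $\pi\in\mathfrak S_n$, an alternating subsequence is a subsequence $\pi_{i_1}\pi_{i_2}\cdots\pi_{i_k}$ ($i_1<\dots<i_k$) with $\pi_{i_1}>\pi_{i_2}<\pi_{i_3}>\cdots$ (a single letter counts, with $k=1$); $\mathrm{as}(\pi)$ is the maximal length of an alternating subsequence. *)

From mathcomp Require Import all_boot.
Set Implicit Arguments. Unset Strict Implicit. Unset Printing Implicit Defensive.

Inductive btree : Type := BEmpty | BNode of btree & nat & btree.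

Definition is_empty (t : btree) : bool := if t is BEmpty then true else false.

Fixpoint word (t : btree) : seq nat :=
  match t with BEmpty => [::] | BNode l a r => word l ++ a :: word r end.

Fixpoint nleaves (t : btree) : nat :=
  match t with
  | BEmpty => 0
  | BNode l _ r => if is_empty l && is_empty r then 1 else nleaves l + nleaves r
  end.

Definition seqmax (s : seq nat) : nat := foldr maxn 0 s.
Definition seqmin (s : seq nat) : nat := foldr minn (head 0 s) s.

Definition is_min_node l a r : bool := all (fun y => a <= y) (word (BNode l a r)).
Definition is_max_node l a r : bool := all (fun y => y <= a) (word (BNode l a r)).

Definition hr_node_ok l a r : bool :=
  let s := word (BNode l a r) in
  (is_empty l && is_empty r) ||
  [&& is_min_node l a r || is_max_node l a r,
      ~~ is_empty r,
      is_min_node l a r ==> (seqmax s \in word r) &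
      is_max_node l a r ==> (seqmin s \in word r)].

Fixpoint all_nodes (P : btree -> nat -> btree -> bool) (t : btree) : bool :=
  match t with
  | BEmpty => true
  | BNode l a r => [&& P l a r, all_nodes P l & all_nodes P r]
  end.

Definition is_HR (t : btree) : bool := uniq (word t) && all_nodes hr_node_ok t.

Fixpoint relabel (f : nat -> nat) (t : btree) : btree :=
  match t with
  | BEmpty => BEmpty
  | BNode l a r => BNode (relabel f l) (f a) (relabel f r)
  end.

Definition hr_act (l : btree) (a : nat) (r : btree) : btree :=
  if is_empty l && is_empty r then BNode l a r else
  let R := a :: word r in
  let newa := if is_min_node l a r then seqmax R else seqmin R in
  let rest := sort leq (rem newa R) in
  let old := sort leq (word r) in
  BNode l newa (relabel (fun y => nth 0 rest (index y old)) r).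

(* psi i : HR-action at the node in in-order position i (0-based), i.e. the
   node labelled by the i-th letter of the reading word; identity if out of
   range. *)
Fixpoint psi (i : nat) (t : btree) : btree :=
  match t with
  | BEmpty => BEmpty
  | BNode l a r =>
      let k := size (word l) in
      if i < k then BNode (psi i l) a r
      else if i == k then hr_act l a r
      else BNode l a (psi (i - k.+1) r)
  end.

Inductive in_orb (T : btree) : btree -> Prop :=
  | orb_refl : in_orb T T
  | orb_step T' i : in_orb T T' -> i < size (word T') -> in_orb T (psi i T').

Definition alternating (s : seq nat) : bool :=
  [forall k : 'I_(size s),
     (k.+1 < size s) ==>
       (if odd k then nth 0 s k < nth 0 s k.+1 else nth 0 s k.+1 < nth 0 s k)].

Definition alt_len (s : seq nat) : nat :=
  \max_(m : (size s).-tuple bool | alternating (mask m s)) size (mask m s).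

From mathcomp Require Import all_boot zify.
Set Implicit Arguments. Unset Strict Implicit. Unset Printing Implicit Defensive.

(* In the reading word of an HR-tree the label of an inner node is a valley if the node is a
   min-node and a peak if it is a max-node: the word rises into the right subtree after a
   min-node, falls after a max-node, and arrives from the left subtree in the opposite
   direction.  For a word with distinct letters the longest alternating subsequence is as long
   as the number of monotone runs of the word preceded by an ascent, and this number can be
   read off the tree: at an inner node the runs of the two subtrees add up, plus one exactly
   when the word turns on entering the node from its left subtree.  Each leaf contributes one
   run, whence the lower bound.  The HR-action at a node swaps its type and relabels its right
   subtree monotonically, so the orbit of a tree consists of the trees obtained by choosing,
   bottom up, which nodes to act on; requiring no extra turn at any node forces each choice. *)

(** * Turns and alternating subsequences *)

(* [turns up s] counts the changes of direction between consecutive steps of [s], the first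
   step being compared with a virtual step that ascends iff [up]. *)
Fixpoint turns (up : bool) (s : seq nat) : nat :=
  match s with
  | x :: ((y :: _) as s') => (up != (x < y)) + turns (x < y) s'
  | _ => 0
  end.

Fixpoint last_up (up : bool) (s : seq nat) : bool :=
  match s with
  | x :: ((y :: _) as s') => last_up (x < y) s'
  | _ => up
  end.

Lemma turns_cons up x s : s != [::] ->
  turns up (x :: s) = (up != (x < head 0 s)) + turns (x < head 0 s) s.
Proof. by case: s. Qed.

Lemma last_up_cons up x s : s != [::] -> last_up up (x :: s) = last_up (x < head 0 s) s.
Proof. by case: s. Qed.

Lemma turns_cat up s1 s2 : s1 != [::] -> s2 != [::] ->
  turns up (s1 ++ s2) = turns up s1 + (last_up up s1 != (last 0 s1 < head 0 s2))
                        + turns (last 0 s1 < head 0 s2) s2.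
Proof.
elim: s1 up => [//|x [|y s1] IH] up _ s2_ne; first by rewrite cat1s turns_cons.
by rewrite cat_cons turns_cons // IH //= !addnA.
Qed.

Lemma last_up_cat up s1 s2 : s1 != [::] -> s2 != [::] ->
  last_up up (s1 ++ s2) = last_up (last 0 s1 < head 0 s2) s2.
Proof.
elim: s1 up => [//|x [|y s1] IH] up _ s2_ne; first by rewrite cat1s last_up_cons.
by rewrite cat_cons last_up_cons // IH.
Qed.

Lemma turns_rcons up s z : s != [::] ->
  turns up (rcons s z) = turns up s + (last_up up s != (last 0 s < z)).
Proof. by move=> s_ne; rewrite -cats1 turns_cat //= addn0. Qed.

Lemma last_up_rcons up s z : s != [::] -> last_up up (rcons s z) = (last 0 s < z).
Proof. by move=> s_ne; rewrite -cats1 last_up_cat. Qed.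

Lemma last_upE up s : last_up up s = up (+) odd (turns up s).
Proof.
elim: s up => [|x [|y s] IH] up; rewrite ?addbF //.
rewrite turns_cons // last_up_cons // IH oddD oddb /=.
by case: up; case: (x < y); case: (odd _).
Qed.

Lemma last_up_true s : last_up true s = odd (turns true s).+1.
Proof. by rewrite last_upE /=; case: (odd _). Qed.

Lemma turns_map f up s : {in s &, {mono f : x y / x <= y}} ->
  turns up (map f s) = turns up s.
Proof.
elim: s up => [|x [|y s] IH] up f_mono //.
have f_lt : f x < f y = (x < y) by rewrite !ltnNge f_mono ?mem_head ?inE ?eqxx ?orbT.
rewrite (turns_cons up (f x)) // -map_cons f_lt IH //.
by move=> u v u_in v_in; apply: f_mono; rewrite inE ?u_in ?v_in orbT.
Qed.

Definition runs (up : bool) (s : seq nat) : nat := if s is [::] then 0 else (turns up s).+1.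

(* The direction [m] in which a peak or valley appended to [s] must be left for the junction to
   add no turn; see [runs_extremum]. *)
Definition junction_dir (up : bool) (s : seq nat) : bool :=
  if s is [::] then up else ~~ last_up up s.

Lemma runsE up s : s != [::] -> runs up s = (turns up s).+1.
Proof. by case: s. Qed.

Lemma runs_map f up s : {in s &, {mono f : x y / x <= y}} -> runs up (map f s) = runs up s.
Proof. by case: s => // x s f_mono; rewrite !runsE // turns_map. Qed.

Lemma runs_extremum up wl a wr m : wr != [::] -> (a < head 0 wr) = m ->
  (wl != [::] -> (last 0 wl < a) = ~~ m) ->
  runs up (wl ++ a :: wr) = runs up wl + (m != junction_dir up wl) + runs m wr.
Proof.
move=> wr_ne a_wr last_wl; have w_ne : wl ++ a :: wr != [::] by case: wl {last_wl}.
rewrite [runs m wr]runsE // runsE //.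
have [-> | wl_ne] := eqVneq wl [::]; first by rewrite cat0s turns_cons // a_wr /= eq_sym addnS.
rewrite turns_cat // [head 0 _]/= last_wl // turns_cons // a_wr runsE //=.
have -> : junction_dir up wl = ~~ last_up up wl by case: (wl) wl_ne.
by case: (m); case: (last_up up wl) => /=; lia.
Qed.

Lemma mem_last_nonempty (s : seq nat) : s != [::] -> last 0 s \in s.
Proof. by case: s => // x s _; apply: mem_last. Qed.

Lemma subseq_rcons_cases (u s : seq nat) z : subseq u (rcons s z) ->
  subseq u s \/ exists2 u0, subseq u0 s & u = rcons u0 z.
Proof.
case/subseqP => m; case/lastP: m => [|m [|]]; rewrite ?size_rcons //.
  move=> /eqP; rewrite eqSS => /eqP m_size ->; right; exists (mask m s).
    exact: mask_subseq.
  by rewrite mask_rcons // -cats1.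
move=> /eqP; rewrite eqSS => /eqP m_size ->; left.
by rewrite mask_rcons // cats0 mask_subseq.
Qed.

Definition alt_step (s : seq nat) k :=
  if odd k then nth 0 s k < nth 0 s k.+1 else nth 0 s k.+1 < nth 0 s k.

Lemma alternatingP s : reflect (forall k, k.+1 < size s -> alt_step s k) (alternating s).
Proof.
apply: (iffP forallP) => [alt_s k k_lt | alt_s k]; last by apply/implyP => /alt_s.
by have := alt_s (Ordinal (ltnW k_lt)); rewrite /= k_lt.
Qed.

Lemma alt_step_rcons u z k : k.+1 < size u -> alt_step (rcons u z) k = alt_step u k.
Proof. by move=> k_lt; rewrite /alt_step !nth_rcons k_lt (ltnW k_lt). Qed.

Lemma alternating_rcons u z : alternating (rcons u z) =
  alternating u && ((u == [::]) || (if odd (size u) then z < last 0 u else last 0 u < z)).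
Proof.
case/lastP: u => [|u y]; first by rewrite /= andbT; apply/alternatingP/alternatingP.
have last_step : alt_step (rcons (rcons u y) z) (size u) =
                 (if odd (size (rcons u y)) then z < y else y < z).
  by rewrite /alt_step !nth_rcons !size_rcons ltnSn ltnn !eqxx ltnn /=; case: (odd _).
have -> : (rcons u y == [::]) = false by case: (u).
rewrite last_rcons -last_step; apply/alternatingP/andP => [alt_uz | [/alternatingP alt_u step_z]].
  split; last by apply: alt_uz; rewrite !size_rcons.
  apply/alternatingP => k k_lt; rewrite -(alt_step_rcons z k_lt).
  by apply: alt_uz; rewrite size_rcons ltnW.
move=> k; rewrite !size_rcons ltnS leq_eqVlt => /orP[/eqP[->]|k_lt] //.
by rewrite alt_step_rcons ?size_rcons //; apply: alt_u; rewrite size_rcons.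
Qed.

(* The equality case, which locates [last 0 u] relative to [last 0 s], carries the induction. *)
Lemma alternating_subseq_size s u : uniq s -> subseq u s -> u != [::] -> alternating u ->
  size u <= (turns true s).+1 /\
  (size u = (turns true s).+1 ->
     if last_up true s then last 0 u <= last 0 s else last 0 s <= last 0 u).
Proof.
elim/last_ind: s u => [|s z IH] u; first by move=> _; rewrite subseq0 => /eqP->.
rewrite rcons_uniq => /andP[z_notin uniq_s].
case/subseq_rcons_cases => [sub_u | [u0 sub_u0 ->]] u_ne alt_u.
  have s_ne : s != [::] by apply: contraNneq u_ne => s_nil; move: sub_u; rewrite s_nil subseq0.
  have y_neq_z : last 0 s != z by apply: contraNneq z_notin => <-; apply: mem_last_nonempty.
  have [size_u side_u] := IH u uniq_s sub_u u_ne alt_u.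
  rewrite turns_rcons // last_up_rcons // last_rcons; split; first lia.
  move=> size_eq; have same_dir : last_up true s = (last 0 s < z).
    by apply/eqP/negPn/negP => diff; move: size_eq size_u; rewrite diff /=; lia.
  move: (side_u ltac:(lia)); rewrite same_dir; case: ltngtP y_neq_z => // yz _ u_y.
    exact: leq_trans u_y (ltnW yz).
  exact: leq_trans (ltnW yz) u_y.
rewrite size_rcons !last_rcons; split; last by case: ifP.
have [-> | u0_ne] := eqVneq u0 [::]; first by [].
have s_ne : s != [::] by apply: contraNneq u0_ne => s_nil; move: sub_u0; rewrite s_nil subseq0.
move: alt_u; rewrite alternating_rcons (negbTE u0_ne) /= => /andP[alt_u0 step_z].
have [size_u0 side_u0] := IH u0 uniq_s sub_u0 u0_ne alt_u0.
rewrite turns_rcons // ltnS; case: (ltngtP (size u0) (turns true s).+1) size_u0 => // size_eq _.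
  by apply: leq_trans (leq_addr _ _).
move: (side_u0 size_eq) step_z; rewrite size_eq -last_up_true.
case: (last_up true s) => [u_y z_u | y_u u_z].
  by rewrite [last 0 s < z]ltnNge (ltnW (leq_trans z_u u_y)) addn1.
by rewrite (leq_ltn_trans y_u u_z) addn1.
Qed.

Lemma exists_alternating_subseq s : uniq s -> s != [::] -> exists u,
  [/\ subseq u s, alternating u, size u = (turns true s).+1 & last 0 u = last 0 s].
Proof.
elim/last_ind: s => [//|s z IH]; rewrite rcons_uniq => /andP[z_notin uniq_s] _.
have [-> | s_ne] := eqVneq s [::].
  by exists [:: z]; split => //; apply/alternatingP.
have y_neq_z : last 0 s != z by apply: contraNneq z_notin => <-; apply: mem_last_nonempty.
have [u [sub_u alt_u size_u last_u]] := IH uniq_s s_ne.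
rewrite turns_rcons // last_rcons.
have odd_u : odd (size u) = last_up true s by rewrite last_up_true size_u.
have [same_dir | turn] := eqVneq (last_up true s) (last 0 s < z); last first.
  exists (rcons u z); split; rewrite ?last_rcons ?size_rcons ?size_u ?addn1 //.
    by rewrite -!cats1 cat_subseq.
  rewrite alternating_rcons alt_u odd_u last_u orbC /=.
  by move: turn; case: (last_up _ _); case: ltngtP y_neq_z.
have: u != [::] by rewrite -size_eq0 size_u.
case/lastP: u sub_u alt_u size_u last_u odd_u => [//|u y] sub_u alt_u size_u last_u odd_u _.
rewrite last_rcons in last_u; rewrite size_rcons in size_u odd_u.
exists (rcons u z); split; rewrite ?last_rcons ?size_rcons ?size_u ?addn0 //.
  rewrite -!cats1 cat_subseq //; apply: subseq_trans sub_u; exact: subseq_rcons.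
move: alt_u; rewrite !alternating_rcons last_u => /andP[-> /=].
move: odd_u => /= odd_u; rewrite -[odd (size u)]negbK odd_u same_dir; case: (u == [::]) => //=.
by case: ltngtP y_neq_z => // yz _ /=; [move=> /ltn_trans; apply | move=> /(ltn_trans yz)].
Qed.

Lemma alt_lenE s : uniq s -> alt_len s = runs true s.
Proof.
move=> uniq_s; have [-> | s_ne] := eqVneq s [::].
  by apply/eqP; rewrite -leqn0; apply/bigmax_leqP => m; rewrite mask0.
rewrite runsE //; apply/eqP; rewrite eqn_leq; apply/andP; split.
  apply/bigmax_leqP => m alt_m.
  have [-> // | m_ne] := eqVneq (mask m s) [::].
  by have [] := alternating_subseq_size uniq_s (mask_subseq m s) m_ne alt_m.
have [u [/subseqP[m size_m ->] alt_u <- _]] := exists_alternating_subseq uniq_s s_ne.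
have size_m' : size m == size s by rewrite size_m.
exact: (@leq_bigmax_cond _ (fun t : (size s).-tuple bool => alternating (mask t s))
          (fun t => size (mask t s)) (Tuple size_m')).
Qed.

Lemma seqmax_ub s y : y \in s -> y <= seqmax s.
Proof.
elim: s => //= x s IH; rewrite inE => /predU1P[-> | /IH y_le]; first exact: leq_maxl.
exact: leq_trans y_le (leq_maxr _ _).
Qed.

Lemma seqmax_mem s : s != [::] -> seqmax s \in s.
Proof.
elim: s => //= x [|y s] IH _; first by rewrite maxn0 mem_head.
by rewrite /maxn inE; case: ltnP => _; rewrite ?IH ?eqxx ?orbT.
Qed.

Lemma foldr_minn_lb x0 s y : y \in s -> foldr minn x0 s <= y.
Proof.
elim: s => //= x s IH; rewrite inE => /predU1P[-> | /IH le_y]; first exact: geq_minl.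
exact: leq_trans (geq_minr _ _) le_y.
Qed.

Lemma foldr_minn_mem x0 s : foldr minn x0 s \in x0 :: s.
Proof.
elim: s => [|x s IH] /=; first exact: mem_head.
move: IH; rewrite /minn !inE; case: ltnP => _; first by rewrite eqxx orbT.
by case/orP => ->; rewrite ?orbT.
Qed.

Lemma seqmin_lb s y : y \in s -> seqmin s <= y.
Proof. exact: foldr_minn_lb. Qed.

Lemma seqmin_mem s : s != [::] -> seqmin s \in s.
Proof.
case: s => // x s _; rewrite /seqmin [head _ _]/=.
by have := foldr_minn_mem x (x :: s); rewrite inE => /predU1P[->|] //; rewrite mem_head.
Qed.

Lemma seqmax_eq s x : x \in s -> {in s, forall y, y <= x} -> seqmax s = x.
Proof.
move=> x_in le_x; apply/eqP; rewrite eqn_leq seqmax_ub // andbT.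
by apply/le_x/seqmax_mem; case: s x_in le_x.
Qed.

Lemma seqmin_eq s x : x \in s -> {in s, forall y, x <= y} -> seqmin s = x.
Proof.
move=> x_in ge_x; apply/eqP; rewrite eqn_leq seqmin_lb //.
by apply/ge_x/seqmin_mem; case: s x_in ge_x.
Qed.

Lemma eq_seqmax s1 s2 : s1 =i s2 -> seqmax s1 = seqmax s2.
Proof.
move=> eq_s; have [s1_nil | s1_ne] := eqVneq s1 [::].
  by move: eq_s; rewrite s1_nil; case: s2 => // y s2 /(_ y); rewrite !inE eqxx.
by apply/esym/seqmax_eq => [|y]; rewrite -eq_s ?seqmax_mem //; apply: seqmax_ub.
Qed.

Lemma eq_seqmin s1 s2 : s1 =i s2 -> seqmin s1 = seqmin s2.
Proof.
move=> eq_s; have [s1_nil | s1_ne] := eqVneq s1 [::].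
  by move: eq_s; rewrite s1_nil; case: s2 => // y s2 /(_ y); rewrite !inE eqxx.
by apply/esym/seqmin_eq => [|y]; rewrite -eq_s ?seqmin_mem //; apply: seqmin_lb.
Qed.

Lemma seqmax_map f (s : seq nat) : {in s &, {mono f : x y / x <= y}} -> s != [::] ->
  seqmax (map f s) = f (seqmax s).
Proof.
move=> f_mono s_ne; apply: seqmax_eq; first by rewrite map_f ?seqmax_mem.
by move=> _ /mapP[y y_in ->]; rewrite f_mono ?seqmax_mem ?seqmax_ub.
Qed.

Lemma seqmin_map f (s : seq nat) : {in s &, {mono f : x y / x <= y}} -> s != [::] ->
  seqmin (map f s) = f (seqmin s).
Proof.
move=> f_mono s_ne; apply: seqmin_eq; first by rewrite map_f ?seqmin_mem.
by move=> _ /mapP[y y_in ->]; rewrite f_mono ?seqmin_mem ?seqmin_lb.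
Qed.

Lemma sorted_nth_leq s i j : sorted ltn s -> i < size s -> j < size s ->
  (nth 0 s i <= nth 0 s j) = (i <= j).
Proof.
move=> sorted_s i_lt j_lt; case: (leqP i j) => [le_ij | lt_ji].
  have sorted_leq : sorted leq s by move: sorted_s; rewrite ltn_sorted_uniq_leq => /andP[].
  exact: (sorted_leq_nth leq_trans leqnn 0 sorted_leq).
by apply/negbTE; rewrite -ltnNge (sorted_ltn_nth ltn_trans 0 sorted_s).
Qed.

Lemma sorted_index_leq s x y : sorted ltn s -> x \in s -> y \in s ->
  (index x s <= index y s) = (x <= y).
Proof.
move=> sorted_s x_in y_in; rewrite -[x in RHS](nth_index 0 x_in) -[y in RHS](nth_index 0 y_in).
by rewrite sorted_nth_leq ?index_mem.
Qed.

Lemma sort_leq_ltn s : uniq s -> sorted ltn (sort leq s).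
Proof.
by move=> uniq_s; rewrite ltn_sorted_uniq_leq sort_uniq uniq_s sort_sorted //; exact: leq_total.
Qed.

Lemma perm_sort_leq s1 s2 : perm_eq s1 s2 -> sort leq s1 = sort leq s2.
Proof. by move/(perm_sortP leq_total leq_trans anti_leq). Qed.

Lemma perm_rem (x : nat) s1 s2 : perm_eq s1 s2 -> perm_eq (rem x s1) (rem x s2).
Proof. by move=> perm_s; apply/permP => p; rewrite !count_rem (permP perm_s) (perm_mem perm_s). Qed.

Lemma map_rem_in (T1 T2 : eqType) (f : T1 -> T2) (s : seq T1) x :
  {in s &, injective f} -> x \in s -> rem (f x) (map f s) = map f (rem x s).
Proof.
elim: s => //= y s IH f_inj x_in; rewrite (inj_in_eq f_inj) ?mem_head //.
case: eqP => [// | y_neq_x] /=; congr cons; apply: IH.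
  by move=> u v u_in v_in; apply: f_inj; rewrite inE ?u_in ?v_in orbT.
by move: x_in; rewrite inE eq_sym; case: eqP.
Qed.

Lemma index_map_in (T1 T2 : eqType) (f : T1 -> T2) (s : seq T1) x :
  {in s &, injective f} -> x \in s -> index (f x) (map f s) = index x s.
Proof.
elim: s => //= y s IH f_inj x_in; rewrite (inj_in_eq f_inj) ?mem_head //.
case: eqP => [// | y_neq_x] /=; congr S; apply: IH.
  by move=> u v u_in v_in; apply: f_inj; rewrite inE ?u_in ?v_in orbT.
by move: x_in; rewrite inE eq_sym; case: eqP.
Qed.

Lemma sort_map_mono f (s : seq nat) : {in s &, {mono f : x y / x <= y}} ->
  sort leq (map f s) = map f (sort leq s).
Proof.
move=> f_mono; apply: (sorted_eq leq_trans anti_leq); first by apply: sort_sorted; exact: leq_total.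
  apply: (@homo_sorted_in _ _ (mem s) _ leq).
  - by move=> x y x_in y_in; rewrite f_mono.
  - by apply/allP => x; rewrite mem_sort.
  - by apply: sort_sorted; exact: leq_total.
by rewrite perm_sort perm_map // perm_sym perm_sort.
Qed.

Definition transfer (old new : seq nat) (y : nat) : nat := nth 0 new (index y old).

Lemma transfer_mono old new : sorted ltn old -> sorted ltn new -> size new = size old ->
  {in old &, {mono transfer old new : x y / x <= y}}.
Proof.
move=> sorted_old sorted_new size_eq x y x_in y_in.
by rewrite /transfer sorted_nth_leq ?size_eq ?index_mem // sorted_index_leq.
Qed.

Lemma map_transfer old new : uniq old -> size new = size old -> map (transfer old new) old = new.
Proof.
move=> uniq_old size_eq; apply: (@eq_from_nth _ 0); rewrite size_map // => i i_lt.
by rewrite (nth_map 0) // /transfer index_uniq.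
Qed.

Lemma transferK old new : uniq new -> size new = size old ->
  {in old, cancel (transfer old new) (transfer new old)}.
Proof.
by move=> uniq_new size_eq y y_in; rewrite /transfer index_uniq ?nth_index // size_eq index_mem.
Qed.

Lemma mem_word_root l a r : a \in word (BNode l a r).
Proof. by rewrite /= mem_cat mem_head orbT. Qed.

Lemma word_eq0 t : (word t == [::]) = is_empty t.
Proof. by case: t => //= l a r; case: (word l). Qed.

Lemma perm_word_node l1 l2 a r1 r2 : perm_eq (word l1) (word l2) -> perm_eq (word r1) (word r2) ->
  perm_eq (word (BNode l1 a r1)) (word (BNode l2 a r2)).
Proof. by move=> perm_l perm_r; rewrite /= perm_cat // perm_cons. Qed.

Lemma is_min_nodeE l a r : is_min_node l a r = (a == seqmin (word (BNode l a r))).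
Proof.
apply/allP/eqP => [ge_a | a_min y y_in]; last by rewrite {1}a_min seqmin_lb.
apply/eqP; rewrite eqn_leq seqmin_lb ?mem_word_root // andbT.
by apply/ge_a/seqmin_mem; rewrite word_eq0.
Qed.

Lemma is_max_nodeE l a r : is_max_node l a r = (a == seqmax (word (BNode l a r))).
Proof.
apply/allP/eqP => [le_a | a_max y y_in]; last by rewrite a_max seqmax_ub.
apply/eqP; rewrite eqn_leq seqmax_ub ?mem_word_root //.
by apply/le_a/seqmax_mem; rewrite word_eq0.
Qed.

Lemma hr_node_okE l a r : hr_node_ok l a r =
  let s := word (BNode l a r) in
  (is_empty l && is_empty r) ||
  [&& (a == seqmin s) || (a == seqmax s), ~~ is_empty r,
      (a == seqmin s) ==> (seqmax s \in word r) &
      (a == seqmax s) ==> (seqmin s \in word r)].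
Proof. by rewrite /hr_node_ok is_min_nodeE is_max_nodeE. Qed.

Lemma is_min_node_perm l1 l2 a r1 r2 : perm_eq (word l1) (word l2) ->
  perm_eq (word r1) (word r2) -> is_min_node l1 a r1 = is_min_node l2 a r2.
Proof.
by move=> perm_l perm_r; rewrite /is_min_node (perm_all _ (perm_word_node a perm_l perm_r)).
Qed.

Lemma hr_node_ok_perm l1 l2 a r1 r2 : perm_eq (word l1) (word l2) ->
  perm_eq (word r1) (word r2) -> is_empty l1 = is_empty l2 -> is_empty r1 = is_empty r2 ->
  hr_node_ok l1 a r1 = hr_node_ok l2 a r2.
Proof.
move=> perm_l perm_r empty_l empty_r; have /perm_mem eq_w := perm_word_node a perm_l perm_r.
rewrite !hr_node_okE /= -/(word (BNode l1 a r1)) -/(word (BNode l2 a r2)).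
by rewrite (eq_seqmax eq_w) (eq_seqmin eq_w) empty_l empty_r !(perm_mem perm_r).
Qed.

Lemma word_relabel f t : word (relabel f t) = map f (word t).
Proof. by elim: t => //= l -> a r ->; rewrite map_cat. Qed.

Lemma is_empty_relabel f t : is_empty (relabel f t) = is_empty t.
Proof. by case: t. Qed.

Lemma nleaves_relabel f t : nleaves (relabel f t) = nleaves t.
Proof. by elim: t => //= l -> a r ->; rewrite !is_empty_relabel. Qed.

Lemma relabel_comp f g t : relabel f (relabel g t) = relabel (f \o g) t.
Proof. by elim: t => //= l -> a r ->. Qed.

Lemma eq_in_relabel f g t : {in word t, f =1 g} -> relabel f t = relabel g t.
Proof.
elim: t => //= l IHl a r IHr eq_fg; rewrite IHl ?IHr ?eq_fg ?mem_cat ?mem_head ?orbT // => x x_in.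
  by apply: eq_fg; rewrite mem_cat inE x_in !orbT.
by apply: eq_fg; rewrite mem_cat x_in.
Qed.

Lemma relabel_id t : relabel id t = t.
Proof. by elim: t => //= l -> a r ->. Qed.

Section MonotoneRelabel.

Variable f : nat -> nat.

Lemma is_min_node_relabel l a r : {in word (BNode l a r) &, {mono f : x y / x <= y}} ->
  is_min_node (relabel f l) (f a) (relabel f r) = is_min_node l a r.
Proof.
move=> f_mono; rewrite !is_min_nodeE.
have -> : word (BNode (relabel f l) (f a) (relabel f r)) = map f (word (BNode l a r)).
  by rewrite /= !word_relabel map_cat.
rewrite seqmin_map ?word_eq0 // (inj_in_eq (incn_inj_in f_mono)) ?mem_word_root //.
by rewrite seqmin_mem ?word_eq0.
Qed.

Lemma hr_node_ok_relabel l a r : {in word (BNode l a r) &, {mono f : x y / x <= y}} ->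
  hr_node_ok (relabel f l) (f a) (relabel f r) = hr_node_ok l a r.
Proof.
move=> f_mono; rewrite !hr_node_okE /=.
have -> : word (relabel f l) ++ f a :: word (relabel f r) = map f (word (BNode l a r)).
  by rewrite /= !word_relabel map_cat.
have w_ne : word (BNode l a r) != [::] by rewrite word_eq0.
have f_inj := incn_inj_in f_mono.
have mem_f : {in word (BNode l a r), forall x, (f x \in map f (word r)) = (x \in word r)}.
  move=> x x_in; apply/mapP/idP => [[y y_in /f_inj->] // | ]; last by exists x.
  by rewrite /= mem_cat inE y_in !orbT.
rewrite seqmin_map ?seqmax_map // !is_empty_relabel word_relabel.
by rewrite !(inj_in_eq f_inj) ?mem_f ?seqmin_mem ?seqmax_mem ?mem_word_root.
Qed.

Lemma all_nodes_relabel t : {in word t &, {mono f : x y / x <= y}} ->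
  all_nodes hr_node_ok (relabel f t) = all_nodes hr_node_ok t.
Proof.
elim: t => //= l IHl a r IHr f_mono; rewrite hr_node_ok_relabel // IHl ?IHr // => x y x_in y_in.
  by apply: f_mono; rewrite mem_cat inE ?x_in ?y_in !orbT.
by apply: f_mono; rewrite mem_cat ?x_in ?y_in.
Qed.

Lemma is_HR_relabel t : {in word t &, {mono f : x y / x <= y}} -> is_HR (relabel f t) = is_HR t.
Proof.
move=> f_mono; rewrite /is_HR all_nodes_relabel // word_relabel.
by rewrite (map_inj_in_uniq (incn_inj_in f_mono)).
Qed.

End MonotoneRelabel.

Lemma is_HR_nodeP l a r :
  reflect [/\ uniq (word (BNode l a r)), hr_node_ok l a r, is_HR l & is_HR r] (is_HR (BNode l a r)).
Proof.
rewrite /is_HR /=; apply: (iffP andP) => [[uniq_w /and3P[ok all_l all_r]] | ]; last first.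
  by case=> -> -> /andP[_ ->] /andP[_ ->].
split => //; first by rewrite all_l (subseq_uniq _ uniq_w) // prefix_subseq.
rewrite all_r andbT (subseq_uniq _ uniq_w) //.
exact: subseq_trans (subseq_cons _ _) (suffix_subseq (word l) _).
Qed.

Lemma is_HR_node_perm l a r l' r' : is_HR (BNode l a r) -> is_HR l' -> is_HR r' ->
  perm_eq (word l') (word l) -> perm_eq (word r') (word r) ->
  is_empty l' = is_empty l -> is_empty r' = is_empty r -> is_HR (BNode l' a r').
Proof.
case/is_HR_nodeP => uniq_w ok _ _ HR_l' HR_r' perm_l perm_r empty_l empty_r.
apply/is_HR_nodeP; split => //; first by rewrite (perm_uniq (perm_word_node a perm_l perm_r)).
by rewrite (hr_node_ok_perm a perm_l perm_r).
Qed.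

Lemma hr_node_ok_leaf l a r : hr_node_ok l a r -> is_empty r -> is_empty l.
Proof.
by rewrite /hr_node_ok => /orP[/andP[] // | /and4P[_ r_ne _ _] r_empty]; rewrite r_empty in r_ne.
Qed.

Lemma is_HR_leaf l a r : is_HR (BNode l a r) -> is_empty r -> l = BEmpty /\ r = BEmpty.
Proof.
case/is_HR_nodeP => _ ok _ _ r_empty; have := hr_node_ok_leaf ok r_empty.
by case: l {ok}; case: r r_empty.
Qed.

(** * The HR-action at an inner node *)

Definition hr_root l a r :=
  if is_min_node l a r then seqmax (a :: word r) else seqmin (a :: word r).
Definition hr_rest l a r := sort leq (rem (hr_root l a r) (a :: word r)).
Definition hr_relabel l a r := transfer (sort leq (word r)) (hr_rest l a r).

Lemma hr_actE l a r : hr_act l a r = if is_empty l && is_empty r then BNode l a r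
                                     else BNode l (hr_root l a r) (relabel (hr_relabel l a r) r).
Proof. by []. Qed.

Lemma hr_act_inner l a r : ~~ is_empty r ->
  hr_act l a r = BNode l (hr_root l a r) (relabel (hr_relabel l a r) r).
Proof. by rewrite hr_actE => /negbTE ->; rewrite andbF. Qed.

Lemma hr_root_mem l a r : hr_root l a r \in a :: word r.
Proof. by rewrite /hr_root; case: ifP => _; [apply: seqmax_mem | apply: seqmin_mem]. Qed.

Lemma size_hr_rest l a r : size (hr_rest l a r) = size (word r).
Proof. by rewrite size_sort size_rem ?hr_root_mem. Qed.

Lemma perm_hr_rest l a r : perm_eq (hr_root l a r :: hr_rest l a r) (a :: word r).
Proof. by rewrite (permPr (perm_to_rem (hr_root_mem l a r))) perm_cons perm_sort. Qed.

Lemma subset_root_right l a r : {subset a :: word r <= word (BNode l a r)}.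
Proof. by move=> y; rewrite inE /= mem_cat inE => /orP[] ->; rewrite ?orbT. Qed.

Section InnerNode.

Variables (l : btree) (a : nat) (r : btree).
Hypotheses (uniq_node : uniq (word (BNode l a r))) (ok_node : hr_node_ok l a r)
           (r_ne : ~~ is_empty r).

Local Notation w := (word (BNode l a r)).

Lemma uniq_root_right : uniq (a :: word r).
Proof. by move: uniq_node; rewrite /= cat_uniq => /and3P[]. Qed.

Lemma root_notin_right : a \notin word r.
Proof. by move: uniq_node; rewrite /= cat_uniq => /and3P[_ _ /andP[]]. Qed.

Lemma root_notin_left : a \notin word l.
Proof. by move: uniq_node; rewrite /= cat_uniq => /and3P[_ /norP[]]. Qed.

Lemma min_node_extrema : is_min_node l a r -> a = seqmin w /\ seqmax w \in word r.
Proof.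
move: ok_node; rewrite hr_node_okE /= (negbTE r_ne) andbF /= => /and3P[_ to_max _].
by rewrite is_min_nodeE => /eqP a_min; split; last by move: to_max; rewrite -a_min eqxx.
Qed.

Lemma max_node_extrema : ~~ is_min_node l a r -> a = seqmax w /\ seqmin w \in word r.
Proof.
move: ok_node; rewrite hr_node_okE /= (negbTE r_ne) andbF /= => /and3P[min_or_max _ to_min].
rewrite is_min_nodeE => a_nmin; move: min_or_max; rewrite (negbTE a_nmin) => /eqP a_max.
by split; last by move: to_min; rewrite -a_max eqxx.
Qed.

Lemma seqmin_neq_seqmax : seqmin w != seqmax w.
Proof.
apply: contraNneq root_notin_right => eq_w; have [min_a | max_a] := boolP (is_min_node l a r).
  by have [a_min max_in] := min_node_extrema min_a; rewrite {1}a_min eq_w.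
by have [a_max min_in] := max_node_extrema max_a; rewrite {1}a_max -eq_w.
Qed.

Lemma root_ltn y : y \in w -> y != a -> (a < y) = is_min_node l a r.
Proof.
move=> y_in y_neq_a; have [min_a | max_a] := boolP (is_min_node l a r).
  by have [a_min _] := min_node_extrema min_a; rewrite ltn_neqAle eq_sym y_neq_a {1}a_min seqmin_lb.
by have [a_max _] := max_node_extrema max_a; rewrite ltnNge a_max seqmax_ub.
Qed.

Lemma head_right_gt_root : (a < head 0 (word r)) = is_min_node l a r.
Proof.
have head_in : head 0 (word r) \in word r.
  have : word r != [::] by rewrite word_eq0.
  by case: (word r) => // x s _; apply: mem_head.
apply: root_ltn; first by rewrite /= mem_cat inE head_in !orbT.
by apply: contraNneq root_notin_right => <-.
Qed.

Lemma last_left_lt_root : ~~ is_empty l -> (last 0 (word l) < a) = ~~ is_min_node l a r.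
Proof.
rewrite -word_eq0 => /mem_last_nonempty last_in.
have last_neq_a : last 0 (word l) != a by apply: contraNneq root_notin_left => <-.
have last_in_w : last 0 (word l) \in w by rewrite /= mem_cat last_in.
by rewrite -(root_ltn last_in_w last_neq_a) ltnNge leq_eqVlt eq_sym (negbTE last_neq_a).
Qed.

Lemma runs_inner_node up : runs up w =
  runs up (word l) + (is_min_node l a r != junction_dir up (word l))
  + runs (is_min_node l a r) (word r).
Proof.
apply: runs_extremum; first by rewrite word_eq0.
  exact: head_right_gt_root.
by rewrite word_eq0; apply: last_left_lt_root.
Qed.

Lemma seqmax_root_right : seqmax (a :: word r) = seqmax w.
Proof.
apply: seqmax_eq => [|y /(subset_root_right l)]; last exact: seqmax_ub.
rewrite inE; have [/min_node_extrema[_ ->] | /max_node_extrema[<- _]] := boolP (is_min_node l a r).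
  by rewrite orbT.
by rewrite eqxx.
Qed.

Lemma seqmin_root_right : seqmin (a :: word r) = seqmin w.
Proof.
apply: seqmin_eq => [|y /(subset_root_right l)]; last exact: seqmin_lb.
rewrite inE; have [/min_node_extrema[<- _] | /max_node_extrema[_ ->]] := boolP (is_min_node l a r).
  by rewrite eqxx.
by rewrite orbT.
Qed.

Lemma hr_root_in_right : hr_root l a r \in word r.
Proof.
rewrite /hr_root seqmax_root_right seqmin_root_right.
by case: ifP => [/min_node_extrema[] | /negbT/max_node_extrema[]].
Qed.

Lemma root_in_hr_rest : a \in hr_rest l a r.
Proof.
rewrite mem_sort rem_mem ?mem_head //.
by apply: contraNneq root_notin_right => ->; apply: hr_root_in_right.
Qed.

Lemma sorted_hr_rest : sorted ltn (hr_rest l a r).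
Proof. by apply/sort_leq_ltn/rem_uniq/uniq_root_right. Qed.

Lemma hr_relabel_mono : {in word r &, {mono hr_relabel l a r : x y / x <= y}}.
Proof.
have /andP[_ uniq_r] := uniq_root_right.
move=> x y x_in y_in; apply: transfer_mono; rewrite ?mem_sort ?size_hr_rest ?size_sort //.
  exact: sort_leq_ltn.
exact: sorted_hr_rest.
Qed.

Lemma perm_hr_relabel : perm_eq (map (hr_relabel l a r) (word r)) (hr_rest l a r).
Proof.
have /andP[_ uniq_r] := uniq_root_right.
rewrite -[X in perm_eq _ X](@map_transfer (sort leq (word r)));
  rewrite ?sort_uniq ?size_hr_rest ?size_sort //.
by apply: perm_map; rewrite perm_sym perm_sort.
Qed.

Lemma perm_hr_act : perm_eq (word (hr_act l a r)) w.
Proof.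
rewrite hr_act_inner //= word_relabel perm_cat2l -(permPr (perm_hr_rest l a r)) perm_cons.
exact: perm_hr_relabel.
Qed.

Lemma is_min_node_hr_act :
  is_min_node l (hr_root l a r) (relabel (hr_relabel l a r) r) = ~~ is_min_node l a r.
Proof.
have := perm_hr_act; rewrite hr_act_inner // => /perm_mem eq_w.
rewrite is_min_nodeE (eq_seqmin eq_w) /hr_root seqmax_root_right seqmin_root_right.
by case: ifP => _; rewrite ?eqxx // eq_sym (negbTE seqmin_neq_seqmax).
Qed.

Lemma hr_node_ok_hr_act : hr_node_ok l (hr_root l a r) (relabel (hr_relabel l a r) r).
Proof.
have := perm_hr_act; rewrite hr_act_inner // => /perm_mem eq_w.
rewrite hr_node_okE /= -/(word (BNode l _ _)) (eq_seqmin eq_w) (eq_seqmax eq_w).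
rewrite is_empty_relabel (negbTE r_ne) andbF /=.
have mem_r' : word (relabel (hr_relabel l a r) r) =i hr_rest l a r.
  by move=> x; rewrite word_relabel (perm_mem perm_hr_relabel).
rewrite !mem_r' /hr_root seqmax_root_right seqmin_root_right.
case: ifP => [/min_node_extrema[a_min _] | /negbT/max_node_extrema[a_max _]].
  by rewrite eqxx orbT /= eq_sym (negbTE seqmin_neq_seqmax) -a_min root_in_hr_rest.
by rewrite eqxx /= (negbTE seqmin_neq_seqmax) -a_max root_in_hr_rest.
Qed.

Lemma hr_actK : hr_act l (hr_root l a r) (relabel (hr_relabel l a r) r) = BNode l a r.
Proof.
set b := hr_root l a r; set g := hr_relabel l a r.
have perm_R : perm_eq (b :: word (relabel g r)) (a :: word r).
  by rewrite -(permPr (perm_hr_rest l a r)) word_relabel perm_cons perm_hr_relabel.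
have root_back : hr_root l b (relabel g r) = a.
  rewrite /hr_root is_min_node_hr_act (eq_seqmax (perm_mem perm_R)) (eq_seqmin (perm_mem perm_R)).
  rewrite seqmax_root_right seqmin_root_right.
  by case: ifP => [/max_node_extrema[<- _] | /negbFE/min_node_extrema[<- _]].
have rest_back : hr_rest l b (relabel g r) = sort leq (word r).
  by rewrite /hr_rest root_back; apply: perm_sort_leq; have := perm_rem a perm_R; rewrite /= eqxx.
have sort_back : sort leq (word (relabel g r)) = hr_rest l a r.
  rewrite -[RHS](sorted_sort leq_trans) ?sort_sorted //; last exact: leq_total.
  by apply: perm_sort_leq; rewrite word_relabel perm_hr_relabel.
rewrite hr_act_inner ?is_empty_relabel // root_back relabel_comp /hr_relabel rest_back sort_back.
congr BNode; rewrite -[RHS]relabel_id; apply: eq_in_relabel => y y_in /=.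
apply: transferK; rewrite ?mem_sort ?size_hr_rest ?size_sort //.
by have := sorted_hr_rest; rewrite ltn_sorted_uniq_leq => /andP[].
Qed.

End InnerNode.

Lemma perm_hr_act_HR l a r :
  is_HR (BNode l a r) -> perm_eq (word (hr_act l a r)) (word (BNode l a r)).
Proof.
case/is_HR_nodeP => uniq_w ok _ _; have [r_empty | r_ne] := boolP (is_empty r).
  by rewrite /hr_act r_empty (hr_node_ok_leaf ok r_empty).
exact: perm_hr_act.
Qed.

Lemma is_HR_hr_act l a r : is_HR (BNode l a r) -> is_HR (hr_act l a r).
Proof.
move=> HR_n; have /is_HR_nodeP[uniq_w ok HR_l HR_r] := HR_n.
have [r_empty | r_ne] := boolP (is_empty r).
  by rewrite /hr_act r_empty (hr_node_ok_leaf ok r_empty).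
have uniq_w' := perm_hr_act uniq_w r_ne; rewrite hr_act_inner // in uniq_w' *.
apply/is_HR_nodeP; split; rewrite ?(perm_uniq uniq_w') ?hr_node_ok_hr_act ?is_HR_relabel //.
exact: hr_relabel_mono.
Qed.

Lemma nleaves_hr_act l a r : nleaves (hr_act l a r) = nleaves (BNode l a r).
Proof. by rewrite /hr_act; case: ifP => //= _; rewrite is_empty_relabel nleaves_relabel. Qed.

Lemma is_empty_hr_act l a r : is_empty (hr_act l a r) = false.
Proof. by rewrite /hr_act; case: ifP. Qed.

Lemma hr_act_relabel f l a r : {in word (BNode l a r) &, {mono f : x y / x <= y}} ->
  hr_act (relabel f l) (f a) (relabel f r) = relabel f (hr_act l a r).
Proof.
move=> f_mono; rewrite !hr_actE !is_empty_relabel; case: ifP => //= _.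
have mono_R : {in a :: word r &, {mono f : x y / x <= y}}.
  by move=> x y x_in y_in; apply: f_mono; apply: subset_root_right.
have mono_r : {in word r &, {mono f : x y / x <= y}}.
  by move=> x y x_in y_in; apply: mono_R; rewrite inE ?x_in ?y_in orbT.
have root_f : hr_root (relabel f l) (f a) (relabel f r) = f (hr_root l a r).
  rewrite /hr_root is_min_node_relabel // word_relabel -map_cons.
  by case: ifP => _; [apply: seqmax_map | apply: seqmin_map].
have rest_f : hr_rest (relabel f l) (f a) (relabel f r) = map f (hr_rest l a r).
  rewrite /hr_rest root_f word_relabel -map_cons map_rem_in ?hr_root_mem //;
    last exact: incn_inj_in mono_R.
  by apply: sort_map_mono => x y /mem_rem x_in /mem_rem y_in; apply: mono_R.
rewrite root_f; congr BNode; rewrite !relabel_comp; apply: eq_in_relabel => y y_in /=.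
rewrite /hr_relabel /transfer rest_f word_relabel sort_map_mono // index_map_in ?mem_sort //.
  by rewrite (nth_map 0) // size_hr_rest -(size_sort leq) index_mem mem_sort.
by move=> u v; rewrite !mem_sort; apply: (incn_inj_in mono_r).
Qed.

Lemma hr_root_perm l1 l2 a r1 r2 : perm_eq (word l1) (word l2) -> perm_eq (word r1) (word r2) ->
  hr_root l1 a r1 = hr_root l2 a r2.
Proof.
move=> perm_l perm_r.
have /perm_mem eq_R : perm_eq (a :: word r1) (a :: word r2) by rewrite perm_cons.
by rewrite /hr_root (is_min_node_perm a perm_l perm_r) (eq_seqmax eq_R) (eq_seqmin eq_R).
Qed.

Lemma hr_relabel_perm l1 l2 a r1 r2 : perm_eq (word l1) (word l2) -> perm_eq (word r1) (word r2) ->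
  hr_relabel l1 a r1 = hr_relabel l2 a r2.
Proof.
move=> perm_l perm_r; have perm_R : perm_eq (a :: word r1) (a :: word r2) by rewrite perm_cons.
by rewrite /hr_relabel /hr_rest (hr_root_perm a perm_l perm_r) (perm_sort_leq perm_r)
           (perm_sort_leq (perm_rem _ perm_R)).
Qed.

Lemma psi_relabel f i t : {in word t &, {mono f : x y / x <= y}} ->
  psi i (relabel f t) = relabel f (psi i t).
Proof.
elim: t i => //= l IHl a r IHr i f_mono; rewrite word_relabel size_map.
case: ifP => _.
  by rewrite /= IHl // => x y x_in y_in; apply: f_mono; rewrite mem_cat ?x_in ?y_in.
case: ifP => _; first exact: hr_act_relabel.
by rewrite /= IHr // => x y x_in y_in; apply: f_mono; rewrite mem_cat inE ?x_in ?y_in !orbT.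
Qed.

(** * Orbits *)

(* [flip_tree t t'] holds when t' arises from t by applying the HR-action at an arbitrary set of
   nodes, each node after its two subtrees; for an HR-tree t these t' make up Orb(t). *)
Inductive flip_tree : btree -> btree -> Prop :=
  | FlipEmpty : flip_tree BEmpty BEmpty
  | FlipNode l a r l' r' (f : bool) : flip_tree l l' -> flip_tree r r' ->
      flip_tree (BNode l a r) (if f then hr_act l' a r' else BNode l' a r').

Lemma flip_treeP t t' : flip_tree t t' ->
  if t is BNode l a r then exists f l' r',
    [/\ flip_tree l l', flip_tree r r' & t' = if f then hr_act l' a r' else BNode l' a r']
  else t' = BEmpty.
Proof. by case=> // l a r l' r' f flip_l flip_r; exists f, l', r'. Qed.

Lemma flip_tree_refl t : flip_tree t t.
Proof. by elim: t => [|l IHl a r IHr]; [exact: FlipEmpty | exact: (FlipNode a false)]. Qed.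

Lemma flip_tree_props t t' : flip_tree t t' -> is_HR t ->
  [/\ perm_eq (word t') (word t), is_HR t', nleaves t' = nleaves t & is_empty t' = is_empty t].
Proof.
elim=> // l a r l' r' f _ IHl _ IHr HR_n; have /is_HR_nodeP[_ _ HR_l HR_r] := HR_n.
have [perm_l HR_l' leaves_l empty_l] := IHl HR_l.
have [perm_r HR_r' leaves_r empty_r] := IHr HR_r.
have HR_n' := is_HR_node_perm HR_n HR_l' HR_r' perm_l perm_r empty_l empty_r.
have perm_n := perm_word_node a perm_l perm_r.
have leaves_n : nleaves (BNode l' a r') = nleaves (BNode l a r).
  by rewrite /= leaves_l leaves_r empty_l empty_r.
case: f => //; split; rewrite ?is_HR_hr_act ?nleaves_hr_act ?is_empty_hr_act //.
exact: perm_trans (perm_hr_act_HR HR_n') perm_n.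
Qed.

Lemma flip_tree_psi t t' i : flip_tree t t' -> is_HR t -> flip_tree t (psi i t').
Proof.
move=> flip_t; elim: flip_t i => [|l a r l' r' f flip_l IHl flip_r IHr] i HR_n.
  exact: FlipEmpty.
have /is_HR_nodeP[_ _ HR_l HR_r] := HR_n.
have [perm_l _ _ _] := flip_tree_props flip_l HR_l.
have [perm_r _ _ empty_r] := flip_tree_props flip_r HR_r.
have [_ HR_n' _ _] := flip_tree_props (FlipNode a false flip_l flip_r) HR_n.
have /is_HR_nodeP[uniq_n' ok_n' _ _] := HR_n'.
case: f => /=; last first.
  case: ifP => _; first exact: (FlipNode a false (IHl i HR_l) flip_r).
  case: ifP => _; first exact: (FlipNode a true flip_l flip_r).
  exact: (FlipNode a false flip_l (IHr _ HR_r)).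
have [r'_empty | r'_ne] := boolP (is_empty r').
  have leaf_fixed : psi i (hr_act l' a r') = hr_act l' a r'.
    by have [-> ->] := is_HR_leaf HR_n' r'_empty; case: i.
  by rewrite leaf_fixed; apply: (FlipNode a true flip_l flip_r).
(* [psi i] acts inside [l'], at the root (undoing the action there) or inside the right subtree. *)
rewrite hr_act_inner //=; case: ifP => [i_lt | _].
  have [perm_il _ _ _] := flip_tree_props (IHl i HR_l) HR_l.
  have perm_il' : perm_eq (word (psi i l')) (word l') by rewrite (permPl perm_il) perm_sym.
  rewrite -(hr_root_perm a perm_il' (perm_refl _)) -(hr_relabel_perm a perm_il' (perm_refl _)).
  by rewrite -hr_act_inner //; apply: (FlipNode a true (IHl i HR_l) flip_r).
case: ifP => _; first by rewrite hr_actK //; apply: (FlipNode a false flip_l flip_r).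
set j := i - _; have [perm_jr _ _ empty_jr] := flip_tree_props (IHr j HR_r) HR_r.
have perm_jr' : perm_eq (word (psi j r')) (word r') by rewrite (permPl perm_jr) perm_sym.
rewrite psi_relabel; last exact: hr_relabel_mono.
rewrite -(hr_root_perm a (perm_refl _) perm_jr') -(hr_relabel_perm a (perm_refl _) perm_jr').
by rewrite -hr_act_inner ?empty_jr -?empty_r //; apply: (FlipNode a true flip_l (IHr j HR_r)).
Qed.

Lemma in_orb_flip_tree t t' : is_HR t -> in_orb t t' -> flip_tree t t'.
Proof. by move=> HR_t; elim=> [|t'' i _ IH _]; [exact: flip_tree_refl | exact: flip_tree_psi]. Qed.

Lemma in_orb_trans t1 t2 t3 : in_orb t1 t2 -> in_orb t2 t3 -> in_orb t1 t3.
Proof. by move=> orb12; elim=> // t' i _ orb13 i_lt; apply: orb_step. Qed.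

Lemma in_orb_left l l' a r : in_orb l l' -> in_orb (BNode l a r) (BNode l' a r).
Proof.
elim=> [|l'' i _ IH i_lt]; first exact: orb_refl.
have -> : BNode (psi i l'') a r = psi i (BNode l'' a r) by rewrite /= i_lt.
by apply: orb_step IH _; rewrite /= size_cat ltn_addr.
Qed.

Lemma in_orb_right l a r r' : in_orb r r' -> in_orb (BNode l a r) (BNode l a r').
Proof.
elim=> [|r'' i _ IH i_lt]; first exact: orb_refl.
have k_lt : size (word l) < (size (word l)).+1 + i by rewrite addSn ltnS leq_addr.
have -> : BNode l a (psi i r'') = psi ((size (word l)).+1 + i) (BNode l a r'').
  by rewrite /= ltnNge (ltnW k_lt) /= gtn_eqF // addKn.
by apply: orb_step IH _; rewrite /= size_cat /= addnS ltn_add2l.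
Qed.

Lemma in_orb_root l a r : in_orb (BNode l a r) (hr_act l a r).
Proof.
have -> : hr_act l a r = psi (size (word l)) (BNode l a r) by rewrite /= ltnn eqxx.
by apply: orb_step (orb_refl _) _; rewrite /= size_cat addnS ltnS leq_addr.
Qed.

Lemma flip_tree_in_orb t t' : flip_tree t t' -> in_orb t t'.
Proof.
elim=> [|l a r l' r' f _ orb_l _ orb_r]; first exact: orb_refl.
have orb_n := in_orb_trans (in_orb_left a r orb_l) (in_orb_right l' a orb_r).
by case: f => //; apply: in_orb_trans orb_n (in_orb_root _ _ _).
Qed.

Lemma nleaves_le_runs up t : is_HR t -> nleaves t <= runs up (word t).
Proof.
elim: t up => [//|l IHl a r IHr] up HR_n; have /is_HR_nodeP[uniq_n ok HR_l HR_r] := HR_n.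
have [r_empty | r_ne] := boolP (is_empty r); first by have [-> ->] := is_HR_leaf HR_n r_empty.
rewrite runs_inner_node //= (negbTE r_ne) andbF.
by have := IHl up HR_l; have := IHr (is_min_node l a r) HR_r; lia.
Qed.

Section FlippedInnerNode.

Variables (l r l' r' : btree) (a : nat) (f : bool).
Hypotheses (HR_node : is_HR (BNode l a r)) (r_ne : ~~ is_empty r)
           (flip_l : flip_tree l l') (flip_r : flip_tree r r').

Local Notation m := (is_min_node l a r (+) f).
Local Notation t' := (if f then hr_act l' a r' else BNode l' a r').

Lemma runs_flip_node up :
  runs up (word t') = runs up (word l') + (m != junction_dir up (word l')) + runs m (word r').
Proof.
have /is_HR_nodeP[_ _ HR_l HR_r] := HR_node.
have [perm_l _ _ _] := flip_tree_props flip_l HR_l.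
have [perm_r _ _ empty_r] := flip_tree_props flip_r HR_r.
have [_ HR_n' _ _] := flip_tree_props (FlipNode a false flip_l flip_r) HR_node.
have /is_HR_nodeP[uniq_n' ok_n' _ _] := HR_n'.
have r'_ne : ~~ is_empty r' by rewrite empty_r.
rewrite -(is_min_node_perm a perm_l perm_r).
case: f; rewrite ?addbT ?addbF; last exact: runs_inner_node.
have uniq_n'' := perm_hr_act uniq_n' r'_ne; rewrite hr_act_inner // in uniq_n'' *.
rewrite runs_inner_node ?(perm_uniq uniq_n'') ?hr_node_ok_hr_act ?is_empty_relabel //.
by rewrite is_min_node_hr_act // word_relabel runs_map //; apply: hr_relabel_mono.
Qed.

Lemma tight_flip_node up : (runs up (word t') == nleaves (BNode l a r)) =
  [&& runs up (word l') == nleaves l, m == junction_dir up (word l')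
    & runs m (word r') == nleaves r].
Proof.
have /is_HR_nodeP[_ _ HR_l HR_r] := HR_node.
have [_ HR_l' leaves_l _] := flip_tree_props flip_l HR_l.
have [_ HR_r' leaves_r _] := flip_tree_props flip_r HR_r.
have := nleaves_le_runs up HR_l'; have := nleaves_le_runs m HR_r'.
rewrite runs_flip_node /= (negbTE r_ne) andbF -leaves_l -leaves_r => le_r le_l.
apply/eqP/and3P => [| [/eqP-> /eqP-> /eqP->]]; last by rewrite eqxx addn0.
case: eqP => [_ | _] /= sum_eq; last by exfalso; lia.
by split => //; apply/eqP; lia.
Qed.

End FlippedInnerNode.

Lemma exists_tight_flip up t :
  is_HR t -> exists2 t', flip_tree t t' & runs up (word t') = nleaves t.
Proof.
elim: t up => [|l IHl a r IHr] up HR_n; first by exists BEmpty; first exact: FlipEmpty.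
have [r_empty | r_ne] := boolP (is_empty r).
  have [-> ->] := is_HR_leaf HR_n r_empty.
  by exists (BNode BEmpty a BEmpty); first exact: flip_tree_refl.
have /is_HR_nodeP[_ _ HR_l HR_r] := HR_n.
have [l' flip_l tight_l] := IHl up HR_l.
have [r' flip_r tight_r] := IHr (junction_dir up (word l')) HR_r.
set f := is_min_node l a r (+) junction_dir up (word l').
exists (if f then hr_act l' a r' else BNode l' a r'); first exact: FlipNode.
by apply/eqP; rewrite tight_flip_node // addKb tight_l tight_r !eqxx.
Qed.

Lemma tight_flip_unique up t t1 t2 : is_HR t -> flip_tree t t1 -> flip_tree t t2 ->
  runs up (word t1) = nleaves t -> runs up (word t2) = nleaves t -> t1 = t2.
Proof.
elim: t up t1 t2 => [|l IHl a r IHr] up t1 t2 HR_n /flip_treeP + /flip_treeP; first by move=> -> ->.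
move=> [f1 [l1 [r1 [flip_l1 flip_r1 ->]]]] [f2 [l2 [r2 [flip_l2 flip_r2 ->]]]].
have [r_empty | r_ne] := boolP (is_empty r).
  have [l_nil r_nil] := is_HR_leaf HR_n r_empty; move: flip_l1 flip_l2 flip_r1 flip_r2.
  rewrite l_nil r_nil => /flip_treeP-> /flip_treeP-> /flip_treeP-> /flip_treeP->.
  by case: f1; case: f2.
have /is_HR_nodeP[_ _ HR_l HR_r] := HR_n.
move=> /eqP; rewrite tight_flip_node // => /and3P[/eqP tight_l1 /eqP m1 /eqP tight_r1].
move=> /eqP; rewrite tight_flip_node // => /and3P[/eqP tight_l2 /eqP m2 /eqP tight_r2].
have eq_l := IHl up l1 l2 HR_l flip_l1 flip_l2 tight_l1 tight_l2.
have eq_f : f1 = f2 by apply: (@addbI (is_min_node l a r)); rewrite m1 m2 eq_l.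
move: tight_r1; rewrite eq_f => tight_r1.
by rewrite eq_l (IHr _ r1 r2 HR_r flip_r1 flip_r2 tight_r1 tight_r2).
Qed.

Theorem mainTheorem2 (n : nat) (pi : seq nat) (Tpi : btree) :
  1 <= n ->
  perm_eq pi (iota 1 n) ->
  is_HR Tpi -> word Tpi = pi ->
  (forall T, in_orb Tpi T -> nleaves Tpi <= alt_len (word T)) /\
  (exists! T, in_orb Tpi T /\ alt_len (word T) = nleaves Tpi).
Proof.
move=> _ _ HR_T _.
have orbit_facts T : in_orb Tpi T ->
    [/\ flip_tree Tpi T, nleaves T = nleaves Tpi & alt_len (word T) = runs true (word T)].
  move=> /(in_orb_flip_tree HR_T) flip_T.
  have [_ /andP[uniq_T _] leaves_T _] := flip_tree_props flip_T HR_T.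
  by split => //; apply: alt_lenE.
split=> [T /orbit_facts[flip_T <- ->] | ].
  by apply: nleaves_le_runs; have [] := flip_tree_props flip_T HR_T.
have [T flip_T tight_T] := exists_tight_flip true HR_T.
have [_ _ alt_T] := orbit_facts T (flip_tree_in_orb flip_T).
exists T; split; first by split; [exact: flip_tree_in_orb | rewrite alt_T].
move=> T' [/orbit_facts[flip_T' _ alt_T'] tight_T'].
by apply: tight_flip_unique HR_T flip_T flip_T' tight_T _; rewrite -alt_T'.
Qed.
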